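(* Let $(A,[-,-,-],\varepsilon)$ be a ternary Leibniz color algebra. Then $A\otimes A$, graded by $(A\otimes A)_c=\bigoplus_{a+b=c}A_a\otimes A_b$, is a Leibniz color algebra with the bracket defined on homogeneous tensors by $$[x\otimes y,\,x'\otimes y']:=x\otimes[y,x',y']+\varepsilon(y,x'+y')\,[x,x',y']\otimes y$$ and extended bilinearly.
   Context: $G$ is an abelian group, $\mathbb{K}$ a field of characteristic $\neq 2$, $\mathcal{H}(V)$ the homogeneous elements of a $G$-graded space $V$; even maps preserve degree. A skew-symmetric bicharacter $\varepsilon:G\times G\to\mathbb{K}^*$ satisfies $\varepsilon(a,b)\varepsilon(b,a)=1$, $\varepsilon(a,b+c)=\varepsilon(a,b)\varepsilon(a,c)$, $\varepsilon(a+b,c)=\varepsilon(a,c)\varepsilon(b,c)$; $\varepsilon(x,y)$ means $\varepsilon$ of the degrees. A Leibniz color algebra is a $G$-graded space with an even bilinear $[-,-]$ such that $[[x,y],z]=[x,[y,z]]+\varepsilon(y,z)[[x,z],y]$ for homogeneous $x,y,z$. A ternary Leibniz color algebra is a $G$-graded space with such $\varepsilon$ and an even trilinear $[-,-,-]$ satisfying $[[x,y,z],t,u]=[x,y,[z,t,u]]+\varepsilon(z,t+u)[x,[y,t,u],z]+\varepsilon(y+z,t+u)[[x,t,u],y,z]$ for all homogeneous $x,y,z,t,u$. *)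

From HB Require Import structures.
From mathcomp Require Import all_boot all_algebra.
From mathcomp Require Import finmap.
From mathcomp.multinomials Require Export monalg.

Set Implicit Arguments.
Unset Strict Implicit.
Unset Printing Implicit Defensive.
Import GRing.Theory.
Local Open Scope ring_scope.

(* A G-graded K-vector space, presented through a homogeneous basis B with a
   degree map deg : B -> G : the space is {malg K[B]} (finitely supported
   K-valued functions on B), and its degree-g component is the span of the
   basis vectors of degree g. *)

Definition homog (G : zmodType) (K : fieldType) (B : choiceType)
  (deg : B -> G) (g : G) (x : {malg K[B]}) : Prop :=
  forall i, i \in msupp x -> deg i = g.

Definition skew_bichar (G : zmodType) (K : fieldType) (eps : G -> G -> K) : Prop :=
  [/\ forall a b, eps a b != 0,
      forall a b, eps a b * eps b a = 1,
      forall a b c, eps a (b + c) = eps a b * eps a c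
    & forall a b c, eps (a + b) c = eps a c * eps b c].

Definition ternary_leibniz_color (G : zmodType) (K : fieldType) (B : choiceType)
  (deg : B -> G) (eps : G -> G -> K)
  (br : {malg K[B]} -> {malg K[B]} -> {malg K[B]} -> {malg K[B]}) : Prop :=
  [/\ (forall y z, linear (fun x => br x y z)),
      (forall x z, linear (fun y => br x y z)),
      (forall x y, linear (fun z => br x y z)),
      (forall a b c x y z, homog deg a x -> homog deg b y -> homog deg c z ->
          homog deg (a + b + c) (br x y z))
    & (forall a b c d e x y z t u,
        homog deg a x -> homog deg b y -> homog deg c z ->
        homog deg d t -> homog deg e u ->
        br (br x y z) t u =
          br x y (br z t u)
          + eps c (d + e) *: br x (br y t u) z
          + eps (b + c) (d + e) *: br (br x t u) y z)].

Definition leibniz_color (G : zmodType) (K : fieldType) (B : choiceType)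
  (deg : B -> G) (eps : G -> G -> K)
  (br : {malg K[B]} -> {malg K[B]} -> {malg K[B]}) : Prop :=
  [/\ (forall y, linear (fun x => br x y)),
      (forall x, linear (fun y => br x y)),
      (forall a b x y, homog deg a x -> homog deg b y ->
          homog deg (a + b) (br x y))
    & (forall a b c x y z,
        homog deg a x -> homog deg b y -> homog deg c z ->
        br (br x y) z = br x (br y z) + eps b c *: br (br x z) y)].

(* Tensor square: A (x) A has basis B * B, with (A (x) A)_c spanned by the
   basis tensors e_i (x) e_j with deg i + deg j = c. *)
Definition tdeg (G : zmodType) (B : choiceType) (deg : B -> G) (p : (B * B)%type) : G :=
  deg p.1 + deg p.2.

Definition tens (K : fieldType) (B : choiceType) (x y : {malg K[B]})
  : {malg K[(B * B)%type]} :=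
  \sum_(i <- msupp x) \sum_(j <- msupp y) << x@_i * y@_j *g (i, j) >>.

Definition tbracket (G : zmodType) (K : fieldType) (B : choiceType)
  (deg : B -> G) (eps : G -> G -> K)
  (br : {malg K[B]} -> {malg K[B]} -> {malg K[B]} -> {malg K[B]})
  (S T : {malg K[(B * B)%type]}) : {malg K[(B * B)%type]} :=
  \sum_(p <- msupp S) \sum_(q <- msupp T)
    (S@_p * T@_q) *:
      (tens << p.1 >> (br << p.2 >> << q.1 >> << q.2 >>)
       + eps (deg p.2) (deg q.1 + deg q.2) *:
           tens (br << p.1 >> << q.1 >> << q.2 >>) << p.2 >>).

From mathcomp Require Import all_boot all_algebra ssrAC ring.
From mathcomp Require Import finmap.
From mathcomp.multinomials Require Import monalg.

Set Implicit Arguments.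
Unset Strict Implicit.
Unset Printing Implicit Defensive.
Import GRing.Theory.
Local Open Scope fset_scope.
Local Open Scope ring_scope.

(** The bracket on [A (x) A] is by definition the bilinear extension of the
    formula on basis tensors, and multilinearity of all maps involved extends
    the formula to arbitrary homogeneous tensors.  Degrees are additive, so
    the bracket is even.  For the Leibniz identity it suffices, again by
    multilinearity, to treat elementary tensors of homogeneous elements: both
    sides then expand into eight tensors, the two iterated ternary brackets on
    the left being unfolded by the ternary Leibniz identity, and the
    coefficients match by the bicharacter laws. *)

Section LinearFun.
Variables (K : fieldType) (U V W : lmodType K).

Lemma linear_fun0 (f : U -> V) : linear f -> f 0 = 0.
Proof.
move=> lin_f; have := lin_f 1 0 0; rewrite !scale1r addr0 => f0D.
by apply: (@addrI _ (f 0)); rewrite addr0 -f0D.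
Qed.

Lemma linear_funD (f : U -> V) : linear f -> forall u v, f (u + v) = f u + f v.
Proof. by move=> lin_f u v; rewrite -[u in LHS]scale1r lin_f scale1r. Qed.

Lemma linear_funZ (f : U -> V) : linear f -> forall a u, f (a *: u) = a *: f u.
Proof.
by move=> lin_f a u; rewrite -[a *: u]addr0 lin_f (linear_fun0 lin_f) addr0.
Qed.

Lemma linear_comp (f : U -> V) (g : V -> W) :
  linear f -> linear g -> linear (fun u => g (f u)).
Proof. by move=> lin_f lin_g a u v; rewrite lin_f lin_g. Qed.

Lemma linear_addZ (f g : U -> V) c :
  linear f -> linear g -> linear (fun u => f u + c *: g u).
Proof.
move=> lin_f lin_g a u v; rewrite lin_f lin_g scalerDr !scalerA mulrC -scalerA.
by rewrite scalerDr addrACA.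
Qed.

End LinearFun.

Section MalgExtension.
Variables (K : fieldType) (C : choiceType) (V : lmodType K).
Implicit Types (S T : {malg K[C]}) (F : C -> V).

Definition malg_ext F S : V := \sum_(p <- msupp S) S@_p *: F p.

Lemma malg_extEw F S (d : {fset C}) :
  msupp S `<=` d -> malg_ext F S = \sum_(p <- d) S@_p *: F p.
Proof.
move=> le_Sd; rewrite /malg_ext (big_fset_incl _ le_Sd) //= => p _.
by move/mcoeff_outdom->; rewrite scale0r.
Qed.

Lemma malg_ext_linear F : linear (malg_ext F).
Proof.
move=> a S T; set d := msupp S `|` msupp T.
have le_aST : msupp (a *: S + T) `<=` d.
  exact: fsubset_trans (msuppD_le _ _) (fsetSU _ (msuppZ_le _ _)).
rewrite !(@malg_extEw _ _ d) ?fsubsetUl ?fsubsetUr // scaler_sumr -big_split.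
by apply: eq_bigr => p _; rewrite mcoeffD mcoeffZ scalerDl scalerA.
Qed.

Lemma malg_ext_linear_fun (F : C -> {malg K[C]} -> V) S :
  (forall p, linear (F p)) -> linear (fun T => malg_ext (F^~ T) S).
Proof.
move=> lin_F a T1 T2; rewrite /malg_ext scaler_sumr -big_split /=.
by apply: eq_bigr => p _; rewrite lin_F scalerDr !scalerA mulrC.
Qed.

Lemma msupp_basis (p : C) : msupp (<< p >> : {malg K[C]}) = [fset p].
Proof. by rewrite msuppU oner_eq0. Qed.

Lemma malg_extU F p : malg_ext F << p >> = F p.
Proof. by rewrite /malg_ext msupp_basis big_seq_fset1 mcoeffUU scale1r. Qed.

Lemma linear_malgE (L : {malg K[C]} -> V) S :
  linear L -> L S = malg_ext (fun p => L << p >>) S.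
Proof.
move=> lin_L; rewrite {1}[S]monalgE /malg_ext.
elim: (msupp S : seq C) => [|p s IHs]; first by rewrite !big_nil linear_fun0.
rewrite !big_cons; have -> : << S@_p *g p >> = S@_p *: << p >> :> {malg K[C]}.
  by apply/malgP => q; rewrite mcoeffZ !mcoeffU mulr_natr.
by rewrite lin_L IHs.
Qed.

Lemma eq_linear_malg (L R : {malg K[C]} -> V) S :
  linear L -> linear R -> (forall p, p \in msupp S -> L << p >> = R << p >>) ->
  L S = R S.
Proof.
move=> lin_L lin_R eqLR; rewrite (linear_malgE S lin_L) (linear_malgE S lin_R).
by rewrite /malg_ext !big_seq; apply: eq_bigr => p /eqLR ->.
Qed.

End MalgExtension.

Section Homogeneous.
Variables (G : zmodType) (K : fieldType) (B : choiceType) (deg : B -> G).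
Implicit Types (x y : {malg K[B]}).

Lemma homog0 g : homog deg g (0 : {malg K[B]}).
Proof. by move=> i; rewrite msupp0. Qed.

Lemma homogD g x y : homog deg g x -> homog deg g y -> homog deg g (x + y).
Proof.
move=> hx hy i /(fsubsetP (msuppD_le _ _)).
by rewrite inE => /orP[/hx | /hy].
Qed.

Lemma homogZ g a x : homog deg g x -> homog deg g (a *: x).
Proof. by move=> hx i /(fsubsetP (msuppZ_le _ _)) /hx. Qed.

Lemma homogU i : homog deg (deg i) (<< i >> : {malg K[B]}).
Proof. by move=> k; rewrite msupp_basis inE => /eqP ->. Qed.

Lemma homog_malg_ext (C : choiceType) g (F : C -> {malg K[B]}) S :
  (forall p, p \in msupp S -> homog deg g (F p)) -> homog deg g (malg_ext F S).
Proof.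
move=> hF; rewrite /malg_ext big_seq.
elim/big_rec: _ => [|p x /hF hFp hx]; first exact: homog0.
exact/homogD/hx/homogZ.
Qed.

End Homogeneous.

Section Tensor.
Variables (K : fieldType) (B : choiceType).
Implicit Types (x y : {malg K[B]}).

Lemma mcoeff_tens x y i j : (tens x y)@_(i, j) = x@_i * y@_j.
Proof.
have coefE (z : {malg K[B]}) k : z@_k = \sum_(l <- msupp z) z@_l *+ (l == k).
  by rewrite {1}[z]monalgE raddf_sum; apply: eq_bigr => l _; exact: mcoeffU.
rewrite /tens raddf_sum (coefE x) (coefE y) big_distrl /=.
apply: eq_bigr => i' _; rewrite raddf_sum big_distrr /=; apply: eq_bigr => j' _.
rewrite mcoeffU xpair_eqE.
by case: eqP; case: eqP; rewrite ?mulr0n ?mul0r ?mulr0 ?mulr1n.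
Qed.

Lemma tens_linearl y : linear (fun x => tens x y).
Proof.
move=> a u v; apply/malgP => -[i j].
by rewrite mcoeffD mcoeffZ !mcoeff_tens mcoeffD mcoeffZ mulrDl mulrA.
Qed.

Lemma tens_linearr x : linear (fun y => tens x y).
Proof.
move=> a u v; apply/malgP => -[i j].
by rewrite mcoeffD mcoeffZ !mcoeff_tens mcoeffD mcoeffZ mulrDr mulrCA.
Qed.

Lemma tensU i j : tens (<< i >> : {malg K[B]}) << j >> = << (i, j) >>.
Proof.
apply/malgP => -[i' j']; rewrite mcoeff_tens !mcoeffU xpair_eqE.
by case: eqP; case: eqP; rewrite ?mulr0n ?mul0r ?mulr0 ?mulr1n ?mulr1.
Qed.

Lemma homog_tens (G : zmodType) (deg : B -> G) a b x y :
  homog deg a x -> homog deg b y -> homog (tdeg deg) (a + b) (tens x y).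
Proof.
move=> hx hy [i j]; rewrite -mcoeff_neq0 mcoeff_tens mulf_eq0 negb_or.
by rewrite !mcoeff_neq0 => /andP[/hx <- /hy <-].
Qed.

End Tensor.

Section TernaryBracket.
Variables (G : zmodType) (K : fieldType) (B : choiceType) (deg : B -> G)
  (eps : G -> G -> K)
  (br : {malg K[B]} -> {malg K[B]} -> {malg K[B]} -> {malg K[B]}).
Hypothesis br_ternary : ternary_leibniz_color deg eps br.
Implicit Types (x y z : {malg K[B]}).

Lemma br_linear1 y z : linear (fun x => br x y z).
Proof. by case: br_ternary. Qed.

Lemma br_linear2 x z : linear (fun y => br x y z).
Proof. by case: br_ternary. Qed.

Lemma br_linear3 x y : linear (br x y).
Proof. by case: br_ternary. Qed.

Lemma homog_br a b c x y z :
  homog deg a x -> homog deg b y -> homog deg c z ->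
  homog deg (a + b + c) (br x y z).
Proof. by case: br_ternary => _ _ _ + _; apply. Qed.

Lemma br_leibniz a b c d e x y z v w :
  homog deg a x -> homog deg b y -> homog deg c z ->
  homog deg d v -> homog deg e w ->
  br (br x y z) v w =
    br x y (br z v w) + eps c (d + e) *: br x (br y v w) z
    + eps (b + c) (d + e) *: br (br x v w) y z.
Proof. by case: br_ternary => _ _ _ _; apply. Qed.

End TernaryBracket.

(* Stated for an abstract tensor map [t] and bracket [bt], so that the long
   expansion below never unfolds their definitions. *)
Section ElementaryTensors.
Variables (G : zmodType) (K : fieldType) (B : choiceType) (deg : B -> G)
  (eps : G -> G -> K)
  (br : {malg K[B]} -> {malg K[B]} -> {malg K[B]} -> {malg K[B]})
  (W : lmodType K) (t : {malg K[B]} -> {malg K[B]} -> W) (bt : W -> W -> W).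
Hypothesis eps_bichar : skew_bichar eps.
Hypothesis br_ternary : ternary_leibniz_color deg eps br.
Hypotheses (t_linearl : forall y, linear (t^~ y))
  (t_linearr : forall x, linear (t x)).
Hypotheses (bt_linearl : forall T, linear (bt^~ T))
  (bt_linearr : forall S, linear (bt S)).
Hypothesis bt_t : forall a b a' b' x y x' y',
  homog deg a x -> homog deg b y -> homog deg a' x' -> homog deg b' y' ->
  bt (t x y) (t x' y') = t x (br y x' y') + eps b (a' + b') *: t (br x x' y') y.
Arguments bt_t {a b a' b' x y x' y'}.

Lemma bracket_leibniz_elementary a b a' b' a'' b'' x y x' y' x'' y'' :
  homog deg a x -> homog deg b y -> homog deg a' x' -> homog deg b' y' ->
  homog deg a'' x'' -> homog deg b'' y'' ->
  bt (bt (t x y) (t x' y')) (t x'' y'') =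
    bt (t x y) (bt (t x' y') (t x'' y''))
    + eps (a' + b') (a'' + b'') *: bt (bt (t x y) (t x'' y'')) (t x' y').
Proof.
move=> hx hy hx' hy' hx'' hy''.
have btDl := linear_funD (bt_linearl _).
have btZl := linear_funZ (bt_linearl _).
have btDr := linear_funD (bt_linearr _).
have btZr := linear_funZ (bt_linearr _).
rewrite (bt_t hx hy hx' hy') (bt_t hx' hy' hx'' hy'') (bt_t hx hy hx'' hy'').
rewrite !btDl !btZl !btDr !btZr.
rewrite (bt_t hx (homog_br br_ternary hy hx' hy') hx'' hy'').
rewrite (bt_t (homog_br br_ternary hx hx' hy') hy hx'' hy'').
rewrite (bt_t hx hy hx' (homog_br br_ternary hy' hx'' hy'')).
rewrite (bt_t hx hy (homog_br br_ternary hx' hx'' hy'') hy').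
rewrite (bt_t hx (homog_br br_ternary hy hx'' hy'') hx' hy').
rewrite (bt_t (homog_br br_ternary hx hx'' hy'') hy hx' hy').
rewrite (br_leibniz br_ternary hy hx' hy' hx'' hy'').
rewrite (br_leibniz br_ternary hx hx' hy' hx'' hy'').
case: eps_bichar => _ eps_skew eps_addr eps_addl.
have tDl := linear_funD (t_linearl _); have tZl := linear_funZ (t_linearl _).
have tDr := linear_funD (t_linearr _); have tZr := linear_funZ (t_linearr _).
rewrite !tDl !tZl !tDr !tZr !scalerDr !scalerA !addrA.
(* Both sides now consist of the same eight tensors; match them up and
   compare coefficients with the bicharacter laws. *)
rewrite [RHS](ACl (1*3*5*7*6*2*4*8))%AC.
congr (_ + _ *: _ + _ *: _ + _ *: _ + _ *: _ + _ *: _ + _ *: _ + _ *: _).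
- by rewrite -(@addrA G b) (eps_addl b) [RHS]mulrC.
- by rewrite -(@addrA G b) (eps_addl b) mulrCA eps_skew mulr1.
- by rewrite -eps_addr !(@addrA G).
- rewrite -[eps b (a' + b') * _]eps_addr mulrC; congr (_ * eps _ _).
  by rewrite (@addrA G) (@addrAC G a') (@addrAC G (a' + a'')).
- ring.
Qed.

End ElementaryTensors.

Section TensorBracket.
Variables (G : zmodType) (K : fieldType) (B : choiceType) (deg : B -> G)
  (eps : G -> G -> K)
  (br : {malg K[B]} -> {malg K[B]} -> {malg K[B]} -> {malg K[B]}).
Hypothesis eps_bichar : skew_bichar eps.
Hypothesis br_ternary : ternary_leibniz_color deg eps br.

Local Notation tbr := (tbracket deg eps br).
Implicit Types (x y : {malg K[B]}) (S T U : {malg K[(B * B)%type]}).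

Definition tbracket_basis (p q : B * B) : {malg K[(B * B)%type]} :=
  tens << p.1 >> (br << p.2 >> << q.1 >> << q.2 >>)
  + eps (deg p.2) (deg q.1 + deg q.2) *:
      tens (br << p.1 >> << q.1 >> << q.2 >>) << p.2 >>.

Lemma tbracketE S T :
  tbr S T = malg_ext (fun p => malg_ext (tbracket_basis p) T) S.
Proof.
rewrite /tbracket /malg_ext; apply: eq_bigr => p _; rewrite scaler_sumr.
by apply: eq_bigr => q _; rewrite scalerA.
Qed.

Lemma tbracket_linearl T : linear (tbr^~ T).
Proof.
move=> a S1 S2; rewrite !tbracketE.
exact: (malg_ext_linear (fun p => malg_ext (tbracket_basis p) T)).
Qed.

Lemma tbracket_linearr S : linear (tbr S).
Proof.
have lin := malg_ext_linear_fun S (fun p => malg_ext_linear (tbracket_basis p)).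
by move=> a T1 T2; rewrite !tbracketE; exact: lin.
Qed.

Lemma tbracketU p q : tbr << p >> << q >> = tbracket_basis p q.
Proof. by rewrite tbracketE !malg_extU. Qed.

Lemma tbracket_tens a b a' b' x y x' y' :
  homog deg a x -> homog deg b y -> homog deg a' x' -> homog deg b' y' ->
  tbr (tens x y) (tens x' y')
    = tens x (br y x' y') + eps b (a' + b') *: tens (br x x' y') y.
Proof.
move=> hx hy hx' hy'; set c := eps b (a' + b').
apply: (@eq_linear_malg _ _ _ (fun u => tbr (tens u y) (tens x' y'))
   (fun u => tens u (br y x' y') + c *: tens (br u x' y') y)).
- exact: linear_comp (tens_linearl _) (tbracket_linearl _).
- exact: linear_addZ (tens_linearl _)
                     (linear_comp (br_linear1 br_ternary _ _) (tens_linearl _)).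
move=> i _ /=.
apply: (@eq_linear_malg _ _ _ (fun u => tbr (tens << i >> u) (tens x' y'))
   (fun u => tens << i >> (br u x' y') + c *: tens (br << i >> x' y') u)).
- exact: linear_comp (tens_linearr _) (tbracket_linearl _).
- exact: linear_addZ (linear_comp (br_linear1 br_ternary _ _) (tens_linearr _))
                     (tens_linearr _).
move=> j /hy deg_j /=.
apply: (@eq_linear_malg _ _ _ (fun u => tbr (tens << i >> << j >>) (tens u y'))
   (fun u => tens << i >> (br << j >> u y')
             + c *: tens (br << i >> u y') << j >>)).
- exact: linear_comp (tens_linearl _) (tbracket_linearr _).
- exact: linear_addZ (linear_comp (br_linear2 br_ternary _ _) (tens_linearr _))
                     (linear_comp (br_linear2 br_ternary _ _) (tens_linearl _)).
move=> i' /hx' deg_i' /=.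
apply: (@eq_linear_malg _ _ _
   (fun u => tbr (tens << i >> << j >>) (tens << i' >> u))
   (fun u => tens << i >> (br << j >> << i' >> u)
             + c *: tens (br << i >> << i' >> u) << j >>)).
- exact: linear_comp (tens_linearr _) (tbracket_linearr _).
- exact: linear_addZ (linear_comp (br_linear3 br_ternary _ _) (tens_linearr _))
                     (linear_comp (br_linear3 br_ternary _ _) (tens_linearl _)).
move=> j' /hy' deg_j' /=.
by rewrite !tensU tbracketU /c -deg_j -deg_i' -deg_j'.
Qed.

Lemma homog_tbracket a b S T :
  homog (tdeg deg) a S -> homog (tdeg deg) b T ->
  homog (tdeg deg) (a + b) (tbr S T).
Proof.
move=> hS hT; rewrite tbracketE; apply: homog_malg_ext => -[i j] /hS <-.
apply: homog_malg_ext => -[i' j'] /hT <-; rewrite /tdeg /=.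
have hU k : homog deg (deg k) (<< k >> : {malg K[B]}) by exact: homogU.
apply: homogD; last apply: homogZ.
  have -> : deg i + deg j + (deg i' + deg j')
            = deg i + (deg j + deg i' + deg j').
    by rewrite !addrA.
  exact: homog_tens (hU i) (homog_br br_ternary (hU j) (hU i') (hU j')).
have -> : deg i + deg j + (deg i' + deg j') = deg i + deg i' + deg j' + deg j.
  by rewrite addrAC !addrA.
exact: homog_tens (homog_br br_ternary (hU i) (hU i') (hU j')) (hU j).
Qed.

Lemma tbracket_leibniz a b c S T U :
  homog (tdeg deg) a S -> homog (tdeg deg) b T -> homog (tdeg deg) c U ->
  tbr (tbr S T) U = tbr S (tbr T U) + eps b c *: tbr (tbr S U) T.
Proof.
move=> hS hT hU; set e := eps b c.
apply: (@eq_linear_malg _ _ _ (fun u => tbr (tbr u T) U)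
   (fun u => tbr u (tbr T U) + e *: tbr (tbr u U) T)).
- exact: linear_comp (tbracket_linearl _) (tbracket_linearl _).
- exact: linear_addZ (tbracket_linearl _)
                     (linear_comp (tbracket_linearl _) (tbracket_linearl _)).
move=> [i j] _ /=.
apply: (@eq_linear_malg _ _ _ (fun u => tbr (tbr << (i, j) >> u) U)
   (fun u => tbr << (i, j) >> (tbr u U) + e *: tbr (tbr << (i, j) >> U) u)).
- exact: linear_comp (tbracket_linearr _) (tbracket_linearl _).
- exact: linear_addZ (linear_comp (tbracket_linearl _) (tbracket_linearr _))
                     (tbracket_linearr _).
move=> [i' j'] /hT deg_ij' /=.
apply: (@eq_linear_malg _ _ _ (fun u => tbr (tbr << (i, j) >> << (i', j') >>) u)
   (fun u => tbr << (i, j) >> (tbr << (i', j') >> u)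
             + e *: tbr (tbr << (i, j) >> u) << (i', j') >>)).
- exact: tbracket_linearr.
- exact: linear_addZ (linear_comp (tbracket_linearr _) (tbracket_linearr _))
                     (linear_comp (tbracket_linearr _) (tbracket_linearl _)).
move=> [i'' j''] /hU deg_ij'' /=.
rewrite /e -deg_ij' -deg_ij'' -!tensU /tdeg /=.
by apply: (bracket_leibniz_elementary eps_bichar br_ternary (@tens_linearl K B)
  (@tens_linearr K B) tbracket_linearl tbracket_linearr tbracket_tens);
  apply: homogU.
Qed.

End TensorBracket.

Theorem mainTheorem11 (G : zmodType) (K : fieldType) (B : choiceType)
  (deg : B -> G) (eps : G -> G -> K)
  (br : {malg K[B]} -> {malg K[B]} -> {malg K[B]} -> {malg K[B]}) :
  (2%:R : K) != 0 ->
  skew_bichar eps ->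
  ternary_leibniz_color deg eps br ->
  leibniz_color (tdeg deg) eps (tbracket deg eps br)
  /\ (forall a b a' b' (x y x' y' : {malg K[B]}),
        homog deg a x -> homog deg b y -> homog deg a' x' -> homog deg b' y' ->
        tbracket deg eps br (tens x y) (tens x' y')
          = tens x (br y x' y') + eps b (a' + b') *: tens (br x x' y') y).
Proof.
move=> _ eps_bichar br_ternary; split; last exact: tbracket_tens.
split.
- exact: (tbracket_linearl deg eps br).
- exact: (tbracket_linearr deg eps br).
- by move=> a b S T; exact: homog_tbracket.
- by move=> a b c S T U; exact: tbracket_leibniz.
Qed.
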